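(* Let $(A,f)$ be a finite-dimensional quadratic Lie algebra over a field $\mathbb{K}$ of characteristic zero, let $d$ be an $f$-skew-symmetric derivation of $A$, and let $(A_b,f_b)$ be the one-dimensional double extension of $(A,f)$ by $(b,d)$. Then $A_b$ is $2$-step nilpotent if and only if $0\neq \mathrm{im}\,d+A^2\subseteq Z(A)\cap\ker d$.
   Context: A quadratic Lie algebra $(A,f)$ is a Lie algebra with a non-degenerate symmetric bilinear form $f$ satisfying $f([x,y],z)+f(y,[x,z])=0$. A derivation $d$ is $f$-skew-symmetric if $f(d(x),y)+f(x,d(y))=0$. The one-dimensional double extension of $(A,f)$ by $(b,d)$ is $A_b=\mathbb{K}b\oplus A\oplus\mathbb{K}\beta$ with bracket $[\lambda b+a+\mu\beta,\lambda' b+a'+\mu'\beta]=\lambda d(a')-\lambda' d(a)+[a,a']_A+f(d(a),a')\beta$ and form $f_b(\lambda b+a+\mu\beta,\lambda' b+a'+\mu'\beta)=\lambda\mu'+\lambda'\mu+f(a,a')$. A Lie algebra $L$ is $2$-step nilpotent if $[L,[L,L]]=0$ and $[L,L]\neq 0$. *)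

From HB Require Import structures.
From mathcomp Require Import all_boot all_order all_algebra.
Set Implicit Arguments. Unset Strict Implicit. Unset Printing Implicit Defensive.
Import GRing.Theory.
Local Open Scope ring_scope.

Definition bilinear_br (K : fieldType) (A : lmodType K) (br : A -> A -> A) :=
  (forall c x y z, br (c *: x + y) z = c *: br x z + br y z) /\
  (forall c x y z, br x (c *: y + z) = c *: br x y + br x z).

Definition bilinear_form (K : fieldType) (A : lmodType K) (f : A -> A -> K) :=
  (forall c x y z, f (c *: x + y) z = c * f x z + f y z) /\
  (forall c x y z, f x (c *: y + z) = c * f x y + f x z).

Definition is_lie (K : fieldType) (A : lmodType K) (br : A -> A -> A) :=
  [/\ bilinear_br br,
      (forall x, br x x = 0) &
      (forall x y z, br x (br y z) + br y (br z x) + br z (br x y) = 0)].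

Definition is_quadratic_lie (K : fieldType) (A : lmodType K)
    (br : A -> A -> A) (f : A -> A -> K) :=
  [/\ is_lie br, bilinear_form f,
      (forall x y, f x y = f y x),
      (forall x, (forall y, f x y = 0) -> x = 0) &
      (forall x y z, f (br x y) z + f y (br x z) = 0)].

Definition is_derivation (K : fieldType) (A : lmodType K)
    (br : A -> A -> A) (d : A -> A) :=
  (forall c x y, d (c *: x + y) = c *: d x + d y) /\
  (forall x y, d (br x y) = br (d x) y + br x (d y)).

Definition is_f_skew (K : fieldType) (A : lmodType K) (f : A -> A -> K) (d : A -> A) :=
  forall x y, f (d x) y + f x (d y) = 0.

(* Carrier of the one-dimensional double extension A_b = K b (+) A (+) K beta;
   the element ((lam, a), mu) stands for lam b + a + mu beta. *)
Definition dext (K : fieldType) (A : lmodType K) : Type := (K * A * K)%type.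

Definition dext_br (K : fieldType) (A : lmodType K) (br : A -> A -> A)
    (f : A -> A -> K) (d : A -> A) (u v : K * A * K) : K * A * K :=
  let: ((l, a), m) := u in
  let: ((l', a'), m') := v in
  ((0, l *: d a' - l' *: d a + br a a'), f (d a) a').

Definition dext_form (K : fieldType) (A : lmodType K) (f : A -> A -> K)
    (u v : K * A * K) : K :=
  let: ((l, a), m) := u in
  let: ((l', a'), m') := v in
  l * m' + l' * m + f a a'.

(* The set of finite sums of brackets [x_i, y_i] with x_i in P and y_i in Q,
   i.e. the subspace [P, Q] spanned by such brackets (scalars can be absorbed
   by bilinearity when P, Q are subspaces). *)
Definition bracket_span (V : zmodType) (br : V -> V -> V) (P Q : V -> Prop) : V -> Prop :=
  fun x => exists n (xs ys : 'I_n -> V),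
    [/\ (forall i, P (xs i)), (forall i, Q (ys i)) & x = \sum_(i < n) br (xs i) (ys i)].

Definition derived (V : zmodType) (br : V -> V -> V) : V -> Prop :=
  bracket_span br (fun _ => True) (fun _ => True).

Definition two_step_nilpotent (V : zmodType) (br : V -> V -> V) : Prop :=
  (forall x, bracket_span br (fun _ => True) (derived br) x -> x = 0) /\
  (exists x, derived br x /\ x <> 0).

Definition imd_plus_derived (V : zmodType) (br : V -> V -> V) (d : V -> V) : V -> Prop :=
  fun x => exists y z, derived br z /\ x = d y + z.

Definition lie_center (V : zmodType) (br : V -> V -> V) : V -> Prop :=
  fun x => forall y, br x y = 0.

From HB Require Import structures.
From mathcomp Require Import all_boot all_order all_algebra.
Import GRing.Theory.
Local Open Scope ring_scope.
Set Implicit Arguments. Unset Strict Implicit. Unset Printing Implicit Defensive.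

(* Brackets in A_b = K b + A + K beta have no b-component and ignore beta, so
   the derived algebra A_b^2 projects onto I := im d + A^2 (using [b, a] = d a)
   and its beta-part, a sum of terms f(d a, a'), vanishes once d does.  Hence
   [A_b, A_b^2] = 0 says exactly that every element of I is central in A and
   killed by d, the beta-component f(d u, a) = -f(u, d a) of [u, a] then
   vanishing by skew-symmetry; and A_b^2 <> 0 says exactly that I <> 0. *)

Definition linear_of (R : pzRingType) (U V : lmodType R) (g : U -> V)
    (gL : linear g) : {linear U -> V} :=
  HB.pack g (GRing.isLinear.Build R U V *:%R g gL).

Section Bilinear.
Variables (K : fieldType) (A : lmodType K).

Lemma bilinear_br0l (br : A -> A -> A) y : bilinear_br br -> br 0 y = 0.
Proof.
case=> brZl _.
exact: (linear0 (linear_of (g := br^~ y) (fun c u v => brZl c u v y))).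
Qed.

Lemma bilinear_form0l (f : A -> A -> K) y : bilinear_form f -> f 0 y = 0.
Proof.
case=> fZl _.
exact: (linear0 (linear_of (V := K^o) (g := f^~ y) (fun c x z => fZl c x z y))).
Qed.

Lemma bilinear_form0r (f : A -> A -> K) x : bilinear_form f -> f x 0 = 0.
Proof.
by case=> _ fZr; exact: (linear0 (linear_of (V := K^o) (g := f x) (fZr^~ x))).
Qed.

Lemma lie_anticomm (br : A -> A -> A) x y :
  bilinear_br br -> (forall z, br z z = 0) -> br x y = - br y x.
Proof.
case=> brZl brZr brxx; apply/eqP; rewrite -addr_eq0.
have brDl z : {morph br^~ z : u v / u + v}.
  exact: linearD (linear_of (g := br^~ z) (fun c u v => brZl c u v z)).
have brDr z : {morph br z : u v / u + v}.
  exact: linearD (linear_of (g := br z) (brZr^~ z)).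
by have := brxx (x + y); rewrite brDl !brDr !brxx add0r addr0 => ->.
Qed.

End Bilinear.

Lemma bracket_span_eq0P (V : zmodType) (br : V -> V -> V) (P Q : V -> Prop) :
  (forall x, bracket_span br P Q x -> x = 0) <->
  (forall p q, P p -> Q q -> br p q = 0).
Proof.
split=> [span0 p q Pp Qq | br0 _ [n [xs [ys [Pxs Qys ->]]]]].
  by apply: span0; exists 1%N, (fun=> p), (fun=> q); rewrite big_ord1.
by apply: big1 => i _; apply: br0.
Qed.

Lemma derived0 (V : zmodType) (br : V -> V -> V) : derived br 0.
Proof. by exists 0%N, (fun=> 0), (fun=> 0); rewrite big_ord0. Qed.

Section DoubleExtension.
Variables (K : fieldType) (A : lmodType K).
Variables (br : A -> A -> A) (f : A -> A -> K) (d : A -> A).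
Hypotheses (brB : bilinear_br br) (brxx : forall x, br x x = 0).
Hypotheses (fB : bilinear_form f) (d_lin : linear d) (dS : is_f_skew f d).
Local Notation brb := (dext_br br f d).

Lemma dext_brE (u v : K * A * K) :
  brb u v = ((0, u.1.1 *: d v.1.2 - v.1.1 *: d u.1.2 + br u.1.2 v.1.2),
             f (d u.1.2) v.1.2).
Proof. by case: u => [[l a] m]; case: v => [[l' a'] m']. Qed.

Lemma dext_derived_b0 w : derived brb w -> w.1.1 = 0.
Proof.
move=> [n [xs [ys [_ _ ->]]]].
by rewrite !raddf_sum; apply: big1 => i _; rewrite dext_brE.
Qed.

Lemma dext_derived_projA w : derived brb w -> imd_plus_derived br d w.1.2.
Proof.
move=> [n [xs [ys [_ _ ->]]]].
exists (\sum_(i < n) ((xs i).1.1 *: (ys i).1.2 - (ys i).1.1 *: (xs i).1.2)),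
       (\sum_(i < n) br (xs i).1.2 (ys i).1.2).
split; first by exists n, (fun i => (xs i).1.2), (fun i => (ys i).1.2).
rewrite !raddf_sum -[d in RHS]/(linear_of d_lin : A -> A) linear_sum -big_split.
by apply: eq_bigr => i _; rewrite linearB !linearZ dext_brE /= scalerN.
Qed.

Lemma dext_derived_nonzero w :
  derived brb w -> w <> 0 -> exists x, imd_plus_derived br d x /\ x <> 0.
Proof.
move=> dw w_neq0; have w_b0 := dext_derived_b0 dw.
have [w1_eq0 | w1_neq0] := eqVneq w.1.2 0; last first.
  by exists w.1.2; split; [exact: dext_derived_projA | exact/eqP].
case: dw => n [xs [ys [_ _ wE]]].
have [/existsP [i dx_neq0] | /existsPn d0] :=
  boolP [exists i : 'I_n, d (xs i).1.2 != 0].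
  exists (d (xs i).1.2); split; last exact/eqP.
  by exists (xs i).1.2, 0; rewrite addr0; split; first exact: derived0.
suff w2_eq0 : w.2 = 0.
  by case: w_neq0; case: w w_b0 w1_eq0 w2_eq0 {wE} => [[l a] m] /= -> -> ->.
rewrite wE raddf_sum; apply: big1 => i _.
by rewrite dext_brE /= (eqP (negPn (d0 i))) bilinear_form0l.
Qed.

Lemma dext_derived_lift x :
  imd_plus_derived br d x -> exists2 w, derived brb w & w.1.2 = x.
Proof.
move=> [y [_ [[n [xs [ys [_ _ ->]]]] ->]]].
pose inA a : K * A * K := ((0, a), 0).
pose xs' (i : 'I_n.+1) :=
  if unlift ord0 i is Some j then inA (xs j) else ((1, 0), 0).
pose ys' (i : 'I_n.+1) :=
  if unlift ord0 i is Some j then inA (ys j) else inA y.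
exists (\sum_(i < n.+1) brb (xs' i) (ys' i)); first by exists n.+1, xs', ys'.
rewrite !raddf_sum big_ord_recl /xs' /ys' unlift_none dext_brE /=.
rewrite bilinear_br0l // scale0r subr0 scale1r addr0; congr (_ + _).
by apply: eq_bigr => i _; rewrite liftK dext_brE /= !scale0r subr0 add0r.
Qed.

Lemma dext_br_eq0P w : w.1.1 = 0 ->
  (forall u, brb u w = 0) <-> lie_center br w.1.2 /\ d w.1.2 = 0.
Proof.
move=> w_b0; split=> [brb0 | [wZ dw0] u].
  have := brb0 ((1, 0), 0).
  rewrite dext_brE /= w_b0 scale0r subr0 scale1r bilinear_br0l // addr0.
  case=> dw0 _; split=> // y; have := brb0 ((0, y), 0).
  rewrite dext_brE /= w_b0 !scale0r subr0 add0r => -[bryw _].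
  by rewrite (lie_anticomm _ _ brB brxx) bryw oppr0.
rewrite dext_brE w_b0 dw0 scaler0 scale0r subr0 add0r.
rewrite (lie_anticomm _ _ brB brxx) wZ oppr0.
by have := dS u.1.2 w.1.2; rewrite dw0 bilinear_form0r // addr0 => ->.
Qed.

End DoubleExtension.

Theorem proposition2p10 (K : fieldType) (A : vectType K)
    (br : A -> A -> A) (f : A -> A -> K) (d : A -> A) :
  [pchar K] =i pred0 ->
  is_quadratic_lie br f ->
  is_derivation br d ->
  is_f_skew f d ->
  two_step_nilpotent (dext_br br f d) <->
  ((exists x, imd_plus_derived br d x /\ x <> 0) /\
   (forall x, imd_plus_derived br d x -> lie_center br x /\ d x = 0)).
Proof.
move=> _ [[brB brxx _] fB _ _ _] [d_lin _] dS.
split=> [[nil [v [dv v_neq0]]] | [[x [Ix x_neq0]] I_central]]; split.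
- exact: dext_derived_nonzero dv v_neq0.
- move=> x Ix; have [w dw <-] := dext_derived_lift f brB Ix.
  apply/(dext_br_eq0P brB brxx fB dS (dext_derived_b0 dw)) => u.
  by apply: (bracket_span_eq0P _ _ _).1 nil u w _ dw.
- apply/bracket_span_eq0P => u w _ dw.
  apply: (dext_br_eq0P brB brxx fB dS (dext_derived_b0 dw)).2.
  exact/I_central/(dext_derived_projA d_lin dw).
- have [w dw wx] := dext_derived_lift f brB Ix.
  by exists w; split=> // w0; apply: x_neq0; rewrite -wx w0.
Qed.
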